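(* For every $2n_1\in\{24,26,28,30,32\}$, every $2n_2\in\{34,36,38\}$ and every integer $s\ge1$, there exist a binary Euclidean formally self-dual LCD $[4sn_1,2sn_1,6]_2$ code and a binary Euclidean formally self-dual LCD $[4sn_2,2sn_2,7]_2$ code. In addition, binary Euclidean formally self-dual LCD $[44s,22s,5]_2$, $[80s,40s,8]_2$ and $[100s,50s,9]_2$ codes exist for every integer $s\ge1$.
   Context: A binary linear code $\mathcal{C}$ is Euclidean LCD if $\mathcal{C}\cap\mathcal{C}^{\perp_E}=\{0\}$, where $\perp_E$ is the dual with respect to $\sum_ix_iy_i$; it is Euclidean formally self-dual if it has the same weight distribution as $\mathcal{C}^{\perp_E}$. $[n,k,d]_2$ denotes length $n$, dimension $k$, minimum distance $d$. *)

From mathcomp Require Import all_boot all_algebra.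
Set Implicit Arguments. Unset Strict Implicit. Unset Printing Implicit Defensive.
Import GRing.Theory.
Local Open Scope ring_scope.

(* A binary linear code of length n is the row space of a matrix C : 'M['F_2]_n. *)
Definition F2 := 'F_2.

Definition wt n (x : 'rV[F2]_n) : nat := #|[set i : 'I_n | x 0 i != 0]|.

Definition in_code n (C : 'M[F2]_n) (x : 'rV[F2]_n) : bool := (x <= C)%MS.

(* Euclidean dual: all y with sum_i x_i y_i = 0 for every codeword x,
   i.e. y *m C^T = 0 ; its row space is kermx C^T *)
Definition edual n (C : 'M[F2]_n) : 'M[F2]_n := kermx C^T.

Definition dimension n (C : 'M[F2]_n) : nat := \rank C.

Definition min_dist n (C : 'M[F2]_n) (d : nat) : Prop :=
  (exists2 x, in_code C x && (x != 0) & wt x = d) /\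
  (forall x, in_code C x -> x != 0 -> (d <= wt x)%N).

Definition euclid_LCD n (C : 'M[F2]_n) : Prop :=
  forall x, in_code C x -> in_code (edual C) x -> x = 0.

Definition weight_count n (C : 'M[F2]_n) (w : nat) : nat :=
  #|[set x : 'rV[F2]_n | in_code C x && (wt x == w)]|.

Definition euclid_FSD n (C : 'M[F2]_n) : Prop :=
  forall w, weight_count C w = weight_count (edual C) w.

Definition exists_FSD_LCD (n k d : nat) : Prop :=
  exists C : 'M[F2]_n,
    [/\ dimension C = k, min_dist C d, euclid_FSD C & euclid_LCD C].

From Stdlib Require Import String Ascii.
From mathcomp Require Import all_boot all_algebra zify.
Set Implicit Arguments. Unset Strict Implicit. Unset Printing Implicit Defensive.
Import GRing.Theory.
Local Open Scope ring_scope.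

(* For a symmetric A over F_2, the code C spanned by [I | A] has dual spanned by
   [A | I], so swapping the two halves of a word is a weight-preserving bijection
   from C onto its dual: C is formally self-dual.  A word of C in the dual is
   (l, lA) with l = lA^2, i.e. l (I + A)^2 = 0, so C is LCD when I + A is
   invertible.  The minimum distance of C is the least wt l + wt (lA), l <> 0;
   for d <= 2t + 2 it suffices to bound it when wt l <= t or, writing
   l = (lA) A^-1, when wt (lA) <= t, which is a finite enumeration.  This is done
   by computation for explicit matrices A of sizes 22, 24, ..., 38, 40 and 50.
   Finally diag(A, ..., A) (s blocks) inherits all three properties, giving
   codes of length 2sk and dimension sk. *)

Lemma pchar_F2 : (2 \in [pchar F2])%N.
Proof. exact: pchar_Fp. Qed.

Lemma natr_neq0_F2 (x : F2) : (x != 0)%:R = x.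
Proof. by case: x => [[|[|m]] //= lt]; apply: val_inj. Qed.

Lemma natr_addb_F2 (a b : bool) : (a (+) b)%:R = a%:R + b%:R :> F2.
Proof. by case: a b => [] []; rewrite ?addr0 ?add0r // addrr_pchar2 ?pchar_F2. Qed.

Lemma oppmx_F2 m n (M : 'M[F2]_(m, n)) : - M = M.
Proof. by apply/matrixP => i j; rewrite mxE oppr_pchar2 ?pchar_F2. Qed.

Lemma addmx_F2 m n (M : 'M[F2]_(m, n)) : M + M = 0.
Proof. by rewrite -[M in M + _]oppmx_F2 addNr. Qed.

Lemma addmx_eq0_F2 m n (M N : 'M[F2]_(m, n)) : (M + N == 0) = (M == N).
Proof. by rewrite addr_eq0 oppmx_F2. Qed.

Lemma wt_sum n (x : 'rV[F2]_n) : wt x = (\sum_(i < n) (x 0%R i != 0%R))%N.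
Proof. by rewrite /wt -sum1_card big_mkcond; apply: eq_bigr => i _; rewrite inE. Qed.

Lemma wt_row_mx m n (a : 'rV[F2]_m) (b : 'rV[F2]_n) : wt (row_mx a b) = (wt a + wt b)%N.
Proof.
rewrite !wt_sum big_split_ord.
by congr (_ + _)%N; apply: eq_bigr => i _; rewrite ?row_mxEl ?row_mxEr.
Qed.

Lemma wt_eq0 n (x : 'rV[F2]_n) : (wt x == 0)%N = (x == 0).
Proof.
rewrite /wt cards_eq0; apply/eqP/eqP => [x0|->]; last by apply/setP => i; rewrite !inE mxE eqxx.
by apply/rowP => i; apply/eqP; move/setP/(_ i): x0; rewrite !inE mxE => /negbFE.
Qed.

Lemma wt0 n : wt (0 : 'rV[F2]_n) = 0%N.
Proof. by apply/eqP; rewrite wt_eq0. Qed.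

Lemma wt_row1 n (i : 'I_n) : wt (row i (1%:M : 'M[F2]_n)) = 1%N.
Proof.
rewrite /wt (_ : [set j | _] = [set i]) ?cards1 //; apply/setP => j.
by rewrite !inE !mxE [j == i]eq_sym; case: (i == j); rewrite ?oner_eq0 ?eqxx.
Qed.

Section SystematicCode.

Variables (k : nat) (A : 'M[F2]_k).

Definition sys_code : 'M[F2]_(k + k) := col_mx (row_mx 1%:M A) 0.

Definition sys_weight (l : 'rV[F2]_k) : nat := (wt l + wt (l *m A))%N.

Definition min_sys_weight (d : nat) : Prop :=
  (exists2 l, l != 0 & sys_weight l = d) /\ (forall l, l != 0 -> (d <= sys_weight l)%N).

Lemma in_sys_code x : in_code sys_code x = (rsubmx x == lsubmx x *m A).
Proof.
rewrite /in_code /sys_code -addsmxE addsmx0; apply/idP/eqP.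
  by case/submxP => u ->; rewrite mul_mx_row mulmx1 row_mxKl row_mxKr.
move=> xr; rewrite -(hsubmxK x) xr -{1}[lsubmx x]mulmx1 -mul_mx_row.
exact: submxMl.
Qed.

Lemma rank_sys_code : \rank sys_code = k.
Proof.
apply/eqP; rewrite eqn_leq rank_col_mx0 rank_leq_row /=.
have G_id : row_mx 1%:M A *m col_mx 1%:M 0 = 1%:M :> 'M_k.
  by rewrite mul_row_col mulmx1 mulmx0 addr0.
by rewrite -{1}(mxrank1 F2 k) -{1}G_id mxrankM_maxl.
Qed.

Lemma sys_code_min_dist d : min_sys_weight d -> min_dist sys_code d.
Proof.
case=> [[l nz_l wl] ge_d]; split.
  exists (row_mx l (l *m A)); last by rewrite wt_row_mx.
  rewrite in_sys_code row_mxKl row_mxKr eqxx -row_mx0 /=.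
  by apply: contra nz_l => /eqP/eq_row_mx[->].
move=> x; rewrite in_sys_code => /eqP xr nz_x.
have nz_xl : lsubmx x != 0.
  by apply: contra nz_x => /eqP xl0; rewrite -(hsubmxK x) xr xl0 mul0mx row_mx0.
by rewrite -(hsubmxK x) xr wt_row_mx ge_d.
Qed.

Hypothesis symA : A^T = A.

Lemma in_edual_sys_code x : in_code (edual sys_code) x = (lsubmx x == rsubmx x *m A).
Proof.
rewrite /in_code /edual sub_kermx /sys_code tr_col_mx tr_row_mx trmx1 trmx0 symA.
rewrite mul_mx_row mulmx0 -row_mx0 -[x in x *m _]hsubmxK mul_row_col mulmx1.
by apply/eqP/eqP => [/eq_row_mx[/eqP] | ->]; rewrite ?addmx_eq0_F2 ?addmx_F2 => // /eqP.
Qed.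

Lemma sys_code_FSD : euclid_FSD sys_code.
Proof.
pose swap (x : 'rV[F2]_(k + k)) := row_mx (rsubmx x) (lsubmx x).
have swapK : involutive swap by move=> x; rewrite /swap row_mxKl row_mxKr hsubmxK.
move=> w; rewrite /weight_count -(card_preimset _ (inv_inj swapK)).
apply: eq_card => x; rewrite !inE in_edual_sys_code in_sys_code row_mxKl row_mxKr.
by rewrite wt_row_mx addnC -wt_row_mx hsubmxK.
Qed.

Hypothesis unitA : 1%:M + A \in unitmx.

Lemma sys_code_LCD : euclid_LCD sys_code.
Proof.
move=> x; rewrite in_sys_code in_edual_sys_code => /eqP xr /eqP xl.
have xlAA : lsubmx x *m A *m A = lsubmx x by rewrite -xr.
have xl0 : lsubmx x *m (1%:M + A) *m (1%:M + A) = 0.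
  by rewrite !mulmxDr !mulmx1 mulmxDl xlAA [_ *m A + _]addrC addmx_F2.
have {}xl0 : lsubmx x = 0.
  have unitA2 : (1%:M + A) *m (1%:M + A) \in unitmx by rewrite unitmx_mul unitA.
  by rewrite -[lsubmx x](mulmxK unitA2) mulmxA xl0 mul0mx.
by rewrite -(hsubmxK x) xr xl0 mul0mx row_mx0.
Qed.

End SystematicCode.

Definition generates_FSD_LCD k (A : 'M[F2]_k) (d : nat) : Prop :=
  [/\ A^T = A, 1%:M + A \in unitmx & min_sys_weight A d].

Lemma exists_FSD_LCD_sys_code k (A : 'M[F2]_k) d :
  generates_FSD_LCD A d -> exists_FSD_LCD (k + k) k d.
Proof.
case=> symA unitA dA; exists (sys_code A); split.
- exact: rank_sys_code.
- exact: sys_code_min_dist.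
- exact: sys_code_FSD.
- exact: sys_code_LCD.
Qed.

Section BlockDiagonal.

Variables (m n : nat) (A : 'M[F2]_m) (B : 'M[F2]_n).

Lemma sys_weight_block l1 l2 :
  sys_weight (block_mx A 0 0 B) (row_mx l1 l2) = (sys_weight A l1 + sys_weight B l2)%N.
Proof. by rewrite /sys_weight mul_row_block !mulmx0 addr0 add0r !wt_row_mx addnACA. Qed.

Lemma min_sys_weight_block d :
  min_sys_weight A d -> min_sys_weight B d -> min_sys_weight (block_mx A 0 0 B) d.
Proof.
case=> [[l nz_l wl] geA] [_ geB]; split.
  exists (row_mx l 0); first by rewrite -row_mx0; apply: contra nz_l => /eqP/eq_row_mx[->].
  by rewrite sys_weight_block wl /sys_weight mul0mx wt0 !addn0.
move=> x nz_x; rewrite -(hsubmxK x) sys_weight_block.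
have [xl0|nz_xl] := eqVneq (lsubmx x) 0; last by rewrite (leq_trans (geA _ nz_xl)) ?leq_addr.
have nz_xr : rsubmx x != 0.
  by apply: contra nz_x => /eqP xr0; rewrite -(hsubmxK x) xl0 xr0 row_mx0.
by rewrite (leq_trans (geB _ nz_xr)) ?leq_addl.
Qed.

Lemma generates_FSD_LCD_block d :
  generates_FSD_LCD A d -> generates_FSD_LCD B d ->
  generates_FSD_LCD (block_mx A 0 0 B) d.
Proof.
case=> symA unitA dA [symB unitB dB]; split; last exact: min_sys_weight_block.
  by rewrite tr_block_mx !trmx0 symA symB.
by rewrite (scalar_mx_block m n) add_block_mx !addr0 block_diag_mx_unit unitA.
Qed.

End BlockDiagonal.

Lemma generates_FSD_LCD_rep k (A : 'M[F2]_k) d s :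
  generates_FSD_LCD A d -> exists B : 'M[F2]_(s.+1 * k), generates_FSD_LCD B d.
Proof.
move=> gA; elim: s => [|s [B gB]]; first by rewrite mul1n; exists A.
by rewrite mulSn; exists (block_mx A 0 0 B); apply: generates_FSD_LCD_block.
Qed.

Lemma exists_FSD_LCD_rep k (A : 'M[F2]_k) d s n m :
  generates_FSD_LCD A d -> (0 < s)%N -> n = (s * (k + k))%N -> m = (s * k)%N ->
  exists_FSD_LCD n m d.
Proof.
case: s => // s gA _ -> ->; have [B gB] := generates_FSD_LCD_rep s gA.
by rewrite mulnDr; apply: exists_FSD_LCD_sys_code gB.
Qed.

Lemma sys_weight_bound_from_light k (A B : 'M[F2]_k) d t :
  A *m B = 1%:M -> (d <= t.*2.+2)%N ->
  (forall l, l != 0 -> (wt l <= t)%N -> (d <= sys_weight A l)%N) ->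
  (forall w, w != 0 -> (wt w <= t)%N -> (d <= sys_weight B w)%N) ->
  forall l, l != 0 -> (d <= sys_weight A l)%N.
Proof.
move=> AB d_le lightA lightB l nz_l.
have [|heavy_l] := leqP (wt l) t; first exact: lightA.
have [light_lA|heavy_lA] := leqP (wt (l *m A)) t; last first.
  by apply: leq_trans d_le _; rewrite -addnn -addnS -addSn leq_add.
have lAB : l *m A *m B = l by rewrite -mulmxA AB mulmx1.
have nz_lA : l *m A != 0 by apply: contra nz_l => /eqP lA0; rewrite -lAB lA0 mul0mx.
by rewrite /sys_weight addnC -{2}lAB; apply: lightB.
Qed.

Fixpoint xor_bits (a b : seq bool) : seq bool :=
  match a, b with
  | x :: a', y :: b' => (x (+) y) :: xor_bits a' b'
  | [::], _ => b
  | _, [::] => a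
  end.

Fixpoint sum_rows (bs : seq bool) (rows : seq (seq bool)) : seq bool :=
  match bs, rows with
  | b :: bs', r :: rs => xor_bits (if b then r else [::]) (sum_rows bs' rs)
  | _, _ => [::]
  end.

Definition bitrow k (s : seq bool) : 'rV[F2]_k := \row_j (nth false s j)%:R.

Definition bitmx k (rows : seq (seq bool)) : 'M[F2]_k :=
  \matrix_(i, j) (nth false (nth [::] rows i) j)%:R.

Definition bits_of_row k (u : 'rV[F2]_k) : seq bool := [seq u 0 j != 0 | j <- enum 'I_k].

Lemma nth_xor_bits a b i : nth false (xor_bits a b) i = nth false a i (+) nth false b i.
Proof. by elim: a b i => [|x a IH] [|y b] [|i] //=; rewrite ?nth_nil ?addbF. Qed.

Lemma bitrow_xor k a b : bitrow k (xor_bits a b) = bitrow k a + bitrow k b.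
Proof. by apply/rowP => j; rewrite !mxE nth_xor_bits natr_addb_F2. Qed.

Lemma bitrow_nil k : bitrow k [::] = 0.
Proof. by apply/rowP => j; rewrite !mxE nth_nil. Qed.

Lemma bitrow_take k s : bitrow k (take k s) = bitrow k s.
Proof. by apply/rowP => j; rewrite !mxE nth_take. Qed.

Lemma row_bitmx k rows (i : 'I_k) : row i (bitmx k rows) = bitrow k (nth [::] rows i).
Proof. by apply/rowP => j; rewrite !mxE. Qed.

Lemma bitrow_sum_rows k n bs rows : (size bs <= n)%N ->
  bitrow k (sum_rows bs rows) =
  \sum_(i < n) (if nth false bs i then bitrow k (nth [::] rows i) else 0).
Proof.
elim: bs rows n => [|b bs IH] rows n /=.
  by move=> _; rewrite bitrow_nil big1 // => i _; rewrite nth_nil.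
case: n => // n; rewrite ltnS => /IH {}IH; rewrite big_ord_recl.
case: rows => [|r rs] /=.
  by rewrite big1 => [|i _]; case: ifP; rewrite ?nth_nil ?bitrow_nil ?addr0.
by rewrite bitrow_xor IH (fun_if (bitrow k)) bitrow_nil.
Qed.

Lemma mul_bitrow k bs rows : (size bs <= k)%N ->
  bitrow k bs *m bitmx k rows = bitrow k (sum_rows bs rows).
Proof.
move=> size_bs; rewrite mulmx_sum_row (bitrow_sum_rows _ _ size_bs).
by apply: eq_bigr => i _; rewrite mxE row_bitmx; case: (nth false bs i); rewrite ?scale1r ?scale0r.
Qed.

Lemma count_take_sum n (s : seq bool) : count id (take n s) = (\sum_(i < n) nth false s i)%N.
Proof.
elim: s n => [|x s IH] [|n] /=; rewrite ?big_ord0 //.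
  by rewrite big1 // => i _; rewrite nth_nil.
by rewrite big_ord_recl IH.
Qed.

Lemma wt_bitrow k s : wt (bitrow k s) = count id (take k s).
Proof.
by rewrite wt_sum count_take_sum; apply: eq_bigr => j _; rewrite mxE; case: (nth false s j).
Qed.

Lemma size_bits_of_row k (u : 'rV[F2]_k) : size (bits_of_row u) = k.
Proof. by rewrite size_map size_enum_ord. Qed.

Lemma bits_of_rowK k (u : 'rV[F2]_k) : bitrow k (bits_of_row u) = u.
Proof.
apply/rowP => j; rewrite mxE (nth_map j) ?size_enum_ord // nth_ord_enum.
exact: natr_neq0_F2.
Qed.

Lemma count_bits_of_row k (u : 'rV[F2]_k) : count id (bits_of_row u) = wt u.
Proof. by rewrite -{2}(bits_of_rowK u) wt_bitrow take_oversize ?size_bits_of_row. Qed.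

Definition unit_bits k i : seq bool := mkseq (fun j => j == i) k.

Definition eq_bits k (a b : seq bool) : bool :=
  all (fun j => nth false a j == nth false b j) (iota 0 k).

Definition sym_bits k (rows : seq (seq bool)) : bool :=
  all (fun i => all (fun j => nth false (nth [::] rows i) j == nth false (nth [::] rows j) i)
    (iota 0 k)) (iota 0 k).

Definition left_inverse_bits k (inv rows : seq (seq bool)) : bool :=
  all (fun i => eq_bits k (sum_rows (take k (nth [::] inv i)) rows) (unit_bits k i))
    (iota 0 k).

Definition add_id_bits k (rows : seq (seq bool)) : seq (seq bool) :=
  [seq xor_bits (unit_bits k i) (nth [::] rows i) | i <- iota 0 k].

Lemma bitrow_unit k (i : 'I_k) : bitrow k (unit_bits k i) = row i 1%:M.
Proof. by apply/rowP => j; rewrite !mxE nth_mkseq // eq_sym. Qed.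

Lemma eq_bits_bitrow k a b : eq_bits k a b -> bitrow k a = bitrow k b.
Proof.
move=> /allP eq_ab; apply/rowP => j; rewrite !mxE.
by rewrite (eqP (eq_ab j _)) // mem_iota ltn_ord.
Qed.

Lemma tr_bitmx k rows : sym_bits k rows -> (bitmx k rows)^T = bitmx k rows.
Proof.
move=> /allP sym; apply/matrixP => i j; rewrite !mxE.
have mem (l : 'I_k) : (l : nat) \in iota 0 k by rewrite mem_iota ltn_ord.
by rewrite (eqP (allP (sym _ (mem j)) _ (mem i))).
Qed.

Lemma mul_bitmx_left_inverse k inv rows :
  left_inverse_bits k inv rows -> bitmx k inv *m bitmx k rows = 1%:M.
Proof.
move=> /allP inv_rows; apply/row_matrixP => i.
rewrite row_mul row_bitmx -bitrow_take mul_bitrow ?size_take_min ?geq_minl //.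
by rewrite (eq_bits_bitrow (inv_rows i _)) ?bitrow_unit // mem_iota ltn_ord.
Qed.

Lemma bitmx_add_id k rows : bitmx k (add_id_bits k rows) = 1%:M + bitmx k rows.
Proof.
apply/matrixP => i j; rewrite !mxE (nth_map 0%N) ?size_iota // nth_iota //.
by rewrite nth_xor_bits natr_addb_F2 nth_mkseq // eq_sym.
Qed.

Fixpoint light_sums_ok k d t (rows : seq (seq bool)) (acc : seq bool) (c : nat) : bool :=
  match rows with
  | [::] => (c == 0)%N || (d <= c + count id (take k acc))%N
  | r :: rs =>
      light_sums_ok k d t rs acc c &&
      (* not [(c < t) ==> _]: vm_compute would then evaluate the pruned branch *)
      (if (c < t)%N then light_sums_ok k d t rs (xor_bits r acc) c.+1 else true)
  end.

Lemma light_sums_ok_sound k d t rows acc c :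
  light_sums_ok k d t rows acc c ->
  forall bs, (size bs <= size rows)%N -> (c + count id bs <= t)%N ->
  (c + count id bs == 0)%N ||
  (d <= c + count id bs + wt (bitrow k acc + bitrow k (sum_rows bs rows)))%N.
Proof.
elim: rows acc c => [|r rs IH] acc c /= => [leaf|/andP[skip_r take_r]] [|b bs] //=.
- by move=> _ _; rewrite bitrow_nil addr0 wt_bitrow !addn0.
- by move=> _; apply: (IH _ _ skip_r [::]).
rewrite ltnS => size_bs; case: b => /=; last by rewrite add0n; apply: IH.
rewrite add1n addnS => lt_t; move: take_r; rewrite ifT ?(leq_trans _ lt_t) ?ltnS ?leq_addr //.
move=> /IH/(_ bs size_bs lt_t).
by rewrite addSn !bitrow_xor [bitrow k r + bitrow k acc]addrC -addrA.
Qed.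

Lemma light_sums_ok_sys_weight k d t rows :
  light_sums_ok k d t rows [::] 0 -> (k <= size rows)%N ->
  forall l : 'rV[F2]_k, l != 0 -> (wt l <= t)%N -> (d <= sys_weight (bitmx k rows) l)%N.
Proof.
move=> ok size_rows l nz_l wt_l.
have := light_sums_ok_sound ok (bs := bits_of_row l).
rewrite size_bits_of_row count_bits_of_row add0n => /(_ size_rows wt_l).
by rewrite wt_eq0 (negPf nz_l) bitrow_nil add0r -mul_bitrow ?size_bits_of_row // bits_of_rowK.
Qed.

Definition pivot_out j (p x : seq bool * seq bool) : seq bool * seq bool :=
  if nth false x.1 j then (xor_bits p.1 x.1, xor_bits p.2 x.2) else x.

Fixpoint find_pivot j (todo : seq (seq bool * seq bool)) :=
  if todo is x :: xs then
    if nth false x.1 j then Some (x, xs)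
    else if find_pivot j xs is Some (p, rest) then Some (p, x :: rest) else None
  else None.

Definition eliminate_column (st : seq (seq bool * seq bool) * seq (seq bool * seq bool)) j :=
  let: (done, todo) := st in
  if find_pivot j todo is Some (p, rest) then
    (rcons [seq pivot_out j p x | x <- done] p, [seq pivot_out j p x | x <- rest])
  else st.

(* Gauss-Jordan elimination on [rows | I]; its result is trusted only through
   left_inverse_bits. *)
Definition inverse_bits k (rows : seq (seq bool)) : seq (seq bool) :=
  let start := [seq (nth [::] rows i, unit_bits k i) | i <- iota 0 k] in
  [seq x.2 | x <- (foldl eliminate_column ([::], start) (iota 0 k)).1].

Definition code_check k d (rows : seq (seq bool)) : bool :=
  let t := d.-1./2 in
  let inv := inverse_bits k rows in
  let rows1 := add_id_bits k rows in
  [&& sym_bits k rows, left_inverse_bits k (inverse_bits k rows1) rows1,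
      left_inverse_bits k inv rows, (k <= size rows)%N, (k <= size inv)%N,
      (0 < k)%N && (d == (count id (take k (nth [::] rows 0))).+1),
      light_sums_ok k d t rows [::] 0 & light_sums_ok k d t inv [::] 0].

Lemma code_check_sound k d rows : code_check k d rows -> generates_FSD_LCD (bitmx k rows) d.
Proof.
case/and5P=> sym unit1 invA size_rows.
case/and4P=> size_inv /andP[k_gt0 /eqP dE] lightA lightInv.
split; first exact: tr_bitmx.
  have [_] := mulmx1_unit (mul_bitmx_left_inverse unit1).
  by rewrite bitmx_add_id.
split.
  exists (row (Ordinal k_gt0) 1%:M); first by rewrite -wt_eq0 wt_row1.
  by rewrite /sys_weight wt_row1 -row_mul mul1mx row_bitmx wt_bitrow dE.
apply: (@sys_weight_bound_from_light _ _ _ _ d.-1./2).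
- exact: mulmx1C (mul_bitmx_left_inverse invA).
- lia.
- exact: light_sums_ok_sys_weight lightA size_rows.
- exact: light_sums_ok_sys_weight lightInv size_inv.
Qed.

Definition bits_of_string (s : string) : seq bool :=
  [seq Ascii.eqb c "1"%char | c <- list_ascii_of_string s].

Local Open Scope string_scope.

Definition A24 : seq string := [::
  "000000000000110110000100";
  "000111100111101101101011";
  "000101100111011101100010";
  "011011001110101100011001";
  "010110001110010011011010";
  "011100111101010110001011";
  "011001110110111100110011";
  "000001100110000001000111";
  "000111000011101111000110";
  "011111110101011011101101";
  "011110111011101101111111";
  "011001001110101100100111";
  "110100101011101111010000";
  "101011100100010101000000";
  "011100101111101010110110";
  "111101101011110001001100";
  "100011001100101000101011";
  "011010011110110101001110";
  "011000100111001010011011";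
  "000110100010101000110010";
  "010111000110000111100000";
  "100000011111001101000001";
  "011011111011001011110001";
  "010101110111000010100111"].

Definition A26 : seq string := [::
  "00100100101000000000010000";
  "00001001110100101101101000";
  "10101111011111110101100011";
  "00000010110110000110010001";
  "01101011110110000001001100";
  "10100000001000100011001011";
  "00111001001001001001000111";
  "01101011100000101100100110";
  "11011001001000110010011000";
  "01111000000110110000110010";
  "10100110101110101001010000";
  "01111000011000101111011111";
  "00111000011001101001011010";
  "00100010000011010010110010";
  "01100101111110010000101001";
  "00100000110001100100000011";
  "01000011001110000110100000";
  "01110001000100011101000000";
  "00010100100101001010101101";
  "01101110001110000101100000";
  "01100001010001101011110111";
  "10010000111111000000101000";
  "01001100100110100010010111";
  "00001011000100000010101101";
  "00100111010111010000101010";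
  "00110110000100110010101101"].

Definition A28 : seq string := [::
  "0100001000101000000000100000";
  "1110111000101110010001111111";
  "0111100001010000111110001110";
  "0011100000100111111111100100";
  "0111001011110010001011010100";
  "0100000110100000111000001011";
  "1100101001100100011100000010";
  "0000010101111011000011111100";
  "0000110001011001011111001010";
  "0010101111000110011100100110";
  "1101111100101010111110000001";
  "0010100110001001001001010111";
  "1100000110111001101010010101";
  "0101001001000110000101001000";
  "0101100101100111110000111101";
  "0001000110011010001011100111";
  "0011010000101010000011111000";
  "0111011011100010001001101110";
  "0011111011111001011010101000";
  "0011001011100100000010111001";
  "0011100110101001101100100010";
  "0101100110010101110001001110";
  "1101000101000011111110000101";
  "0100100100011010100100000110";
  "0110010110000110111101001000";
  "0111100101011011010001110101";
  "0110011011010001010011010001";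
  "0100010000111011000100100110"].

Definition A30 : seq string := [::
  "001000000000100010010001000000";
  "011111000111000000110010100100";
  "111001100101010100000111011010";
  "010110011101000001001010011111";
  "010100000101000010100100100110";
  "011000001001101100001010100011";
  "001000010001111111101001011100";
  "000100110111111101000101111111";
  "000101000010001110000011100000";
  "011110010110010101100111100010";
  "010000011101110110010110001101";
  "011111110010001011000001111010";
  "100001110010110010000001000001";
  "001000110110100110111101111101";
  "000001111001001010010011000010";
  "001001111110010000001011011011";
  "100010101011111010110101001010";
  "000100110101000001100011010101";
  "010010100100010011010011101100";
  "110000000010011010100010111110";
  "000101100000010100000111010000";
  "001010010110010010001011001100";
  "011101001110001101111111001100";
  "101000111101111111101111011011";
  "010011011101010000110000101111";
  "001100110001010101011001001101";
  "001100110011010110110111110000";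
  "010110110010010001110110110010";
  "001111010101001110010001100100";
  "000101010010110101000001110000"].

Definition A32 : seq string := [::
  "01000001000101000000000000001000";
  "10110100110001101010111101100101";
  "01111101000010010100000100000011";
  "01101111110111000011011101011111";
  "00110100101110100100011000000010";
  "01111000100100000100101100010111";
  "00010000010101011110101011011111";
  "10110000110101101000010001000110";
  "01011101101000111110110010011000";
  "01010011011100110110010110011000";
  "00001000111011010111010001100100";
  "10011111010100011111011011100001";
  "00111000001000000101010101100000";
  "11010011001001001010100010110110";
  "01001001110000111110000001011100";
  "00100010111100111011010001010010";
  "01000011100101110110110011111110";
  "00101110111110101011101111000001";
  "01010010111101111110110111110011";
  "00010000001110010101001101110101";
  "01000110100001001110011100100110";
  "01011001111110011010100001110101";
  "01011110000100000101101010001000";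
  "01110100010010000111100110100011";
  "00000010110101001110001111000100";
  "01010011001110111111010011100000";
  "01000000001111001011110101000011";
  "00010110110001111011010000010001";
  "10010010110000101000001000000101";
  "01010111001001101001110010001111";
  "00111111000001011010100100100111";
  "01110110000100000111010100111111"].

Definition A34 : seq string := [::
  "0000010000000110000000000000101010";
  "0100010101100001010110011010011010";
  "0011001001111010001001110010000101";
  "0011000110100100001001001001101001";
  "0000100001110000000000110001101000";
  "1100011011101000001101111000101011";
  "0010011110101001100101000011110001";
  "0101001101111001000010010101111111";
  "0001011011111100101000000001010011";
  "0110110110010011000111100000101001";
  "0111111110001101110100001010011000";
  "0010100111001000101110001011111010";
  "0010011110110000110000001101001001";
  "1001000010100011100011000010011100";
  "1010000001000110101010011000000100";
  "0100001101100100000010101000001001";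
  "0000001010111110100000011010111001";
  "0100000000101000010110011101011110";
  "0011010010010010000011010111101100";
  "0100011001110000010100011110010111";
  "0100000101010111011010000111100110";
  "0011011001000100001001101111111110";
  "0010110001000001000001001101000100";
  "0110110100000010111100010100110100";
  "0101010000111011110101101010110011";
  "0000000100001000011111110101001110";
  "0110001000110100101111001011101100";
  "0001101110011000011011100110001110";
  "1001111101010000101011011010011111";
  "0100001110110100110101011000101000";
  "1101110101111101111001000111110001";
  "0010000100000110011111110111100101";
  "1100010110010000010111001101100001";
  "0011011111001001100100001000101111"].

Definition A36 : seq string := [::
  "000000000110001011000100000000000000";
  "001111100101110101000000101111010101";
  "010111101000011000010000111111010101";
  "011011000010110110010111000100110101";
  "011111001011010001000101100000011010";
  "011110110101111100100000101111000100";
  "011001001010110000110111101101011001";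
  "000001001001111111111101101101111010";
  "001010111100110010110111000111101110";
  "110001001100101111110001110110100100";
  "100110100001010000111111111101000010";
  "010011010011100100010100001001101000";
  "010101111101010111010001110111100100";
  "011111111010101101100010111101110010";
  "101001010100011110001101101110010100";
  "010101010101111100111000010010010011";
  "100100011100101011111011001001101000";
  "110010010100110010111010111010111001";
  "000001111110010111100011111100010100";
  "001100111111100111001000000101010110";
  "000000010010001111010110100011100111";
  "100110111011001000001011101000011000";
  "000100101010010011101101001001100010";
  "000110111110101010100110001000111001";
  "011011110110111001101100101101111001";
  "001000000110110101100000001101110001";
  "011001110011011011100111111000011111";
  "011101111110111000110000110000100001";
  "011001001100101101001000000000110001";
  "011001111011110010011010110001000100";
  "000100011101110011001011110110100110";
  "011110110000011101110101111010011011";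
  "000010111001000011000101101000010101";
  "011101001100101000111000001001101101";
  "000010011010010100011010001000110001";
  "011100100000000101001001111110011110"].

Definition A38 : seq string := [::
  "00000100001000000000000001010001000100";
  "00010111001101010100111001001111100100";
  "00010001111000010100000101010100111100";
  "01111111101110011011000111110001110011";
  "00011001100010000001001101101111001010";
  "11010101010111000101110110100010110001";
  "01010001110000100011111111100010010100";
  "01111111010111110101011110101110000110";
  "00111010001000111101111011010110100011";
  "00100111001111110101111011101011001110";
  "11110000111011100011001000001101010011";
  "01010101010101111111001110100111111101";
  "00011101011010110110100001000001011100";
  "01000101011101000101100010011011101100";
  "00000011111110101100001001000001011111";
  "01110001110110000110111110000001111001";
  "00010000100100101011101111110010111010";
  "01100101110111110110001100011110101010";
  "00010010001110011111111111100110001001";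
  "00011111111101001010000111011100011110";
  "01000110110011011010110000000101101111";
  "01000111110000010010110101100110000100";
  "01001011111100111110001111000110011101";
  "00111111000100011111011110011010100011";
  "00010111110101011011001101110111011001";
  "11111010110010101011011010101111011100";
  "00011111010100001010010011010010100100";
  "10110000100001001101000110101100000111";
  "01001001011001000101000101010000000101";
  "01101001101100000111111011010010011001";
  "01001111110101001110011111100100100110";
  "11011000011111110000100011000001010111";
  "01110100100101011100100100100010010100";
  "00110110001110111001001011000101100010";
  "00101000010111111111101011000100001101";
  "11100011010111100001111001111011101111";
  "00011001111000101101100100010011010110";
  "00010100101100110010101110011101001100"].

Definition A22 : seq string := [::
  "0000000001100100000010";
  "0110100111100101001001";
  "0110100110010101010110";
  "0000011111000111011011";
  "0110101011000100101101";
  "0001010100110101110111";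
  "0001101010011000100101";
  "0111010000100000110000";
  "0111101010001011111111";
  "1101100001100000100111";
  "1100010101110001010110";
  "0010011000101000011010";
  "0000001010011010111011";
  "1111110000000010010100";
  "0001000010001111000011";
  "0111010010100011011111";
  "0000111111001000001000";
  "0011010110111101001001";
  "0101100010011001110001";
  "0010111011100101000100";
  "1011010011111011000010";
  "0101111011001011011001"].

Definition A40 : seq string := [::
  "0000001000000001100000000000000010110010";
  "0111100100101000110111101000110001110100";
  "0111110011101100101100010101101010010000";
  "0110010010101111001100110000101010100110";
  "0110110000111111001111111000011110101101";
  "0011111110000111101101101010010100100110";
  "1000010111001001100011010100001101010011";
  "0100011111101110111000101010110000101100";
  "0011011101001100100111100011111010011000";
  "0010001110000001010000101111011010000110";
  "0111100100000110010100110001101010010110";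
  "0000100000010111111111011100100001110111";
  "0111101110000110011100101011111101011110";
  "0011110110111001111011010001110101011011";
  "0001110100111010010101001010010100101110";
  "1001111001010101000101110000000001110000";
  "1110011110010100001100110110000001010111";
  "0100000101111110010011001000100011110001";
  "0011110100011100101111110110101001111101";
  "0111110010111011101011010010000111101010";
  "0100101010010100011110011001101011010010";
  "0100111010010111011100111100001011100101";
  "0101110111101001101001111000000011000011";
  "0011101000110101101111101011000110010110";
  "0100110101011010010011111100011110101101";
  "0010001001010000101001001111110100111010";
  "0000010111001010101100010111001100110000";
  "0010000011101100000010010111111101110011";
  "0111000110111100011010000101001101111001";
  "0100110111001110000000001101001100110100";
  "0011101011101000001011001011110001000100";
  "0000111000001110000100011111110110010011";
  "1011100011100000010111111000000110101001";
  "0100001000011101111111100001101000010011";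
  "1101110100010011011101001111110010001001";
  "1110001010111101111010010111110101000000";
  "0000100110001110001100001100100010100000";
  "0101110101111010101001011000011000000010";
  "1001011001111110100110110101000101000110";
  "0000101000010100111001101001100111100000"].

Definition A50 : seq string := [::
  "01000000010010000001000000000001100000100000001000";
  "10101111101111100010101011001111011001101100011010";
  "01011100111000001010100101001010010111011001101010";
  "00110111100111110110110011110111000111000100001000";
  "01101001100000101111011001110011001010110111010000";
  "01110000000001010000110111010011110000111011110000";
  "01010000001111111110001101110111111011000110100110";
  "01011001000110010001101101000100011011010100110111";
  "01111000111100011011001000100110100100100100000000";
  "10100000111000010000010100011000111111100110101000";
  "01100010110101000101100100111100001110100000000110";
  "01010011101110011010110100010010111101111010011011";
  "11010011000110111101100111100000110001001110110101";
  "01010110001001101001010011100011110110110010111000";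
  "01011010000011011000110111100110101001111011111101";
  "00010111110110111000100000001111001110100111000000";
  "00101010100111110100001011000101001001010100011111";
  "00011010001010001010010000010110010000101000101100";
  "01111010100100000111111000000111011110110000101011";
  "10001001101011000010111011001111110110101100101100";
  "01110101001110110011000011111011010110111111110110";
  "00011100010101100111010000101111111011011000110000";
  "01001011100000001011001100000110111000111100010110";
  "00100111011110100000001001110000111100001010100011";
  "01010100000011101001100011110010111010111110001001";
  "01111111000011101001100111111001110100110111010100";
  "00011010101011100000110111010010011011010110001111";
  "00011110011100000100100111100101000000001111011011";
  "01100000011000010001110001001110101001110101001101";
  "01010011101000111111011000011101010111101011110001";
  "01111110100101110111111010101001101000101010100001";
  "11011110000001011011110001010111001100010010100010";
  "10000110110111100001011111001010011100101011000100";
  "01100111010111000111111111100100111100100011111100";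
  "01001011011100111010011110101011111100001110011000";
  "00110000111101010011100101000101111000001010100011";
  "00111011011001010011110010100100000011010011101100";
  "01110011010110101000010000101100000010101010011010";
  "11001100111101110111101011001110110001110100011011";
  "00101101000101101010111011101001000010101000011001";
  "01100100000110100101111110010110101101011110100100";
  "01011011110010011001101011111000001000101110000110";
  "00001110010111110000100111110111111111001101100000";
  "00101100000000110000100001011100110010000010110001";
  "00100111010011100111110100000111010110001011111011";
  "01001101000111101000111001010100011001110001101101";
  "11110000010101101111000010111000011011110000110000";
  "00000011001010101101101001101000110010001100010000";
  "01100011001100001010101100110001000101100100100010";
  "00000001000110101010000110111110000100110001110000"].

Lemma generates_A24 : generates_FSD_LCD (bitmx 24 (map bits_of_string A24)) 6.
Proof. by apply: code_check_sound; vm_compute. Qed.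

Lemma generates_A26 : generates_FSD_LCD (bitmx 26 (map bits_of_string A26)) 6.
Proof. by apply: code_check_sound; vm_compute. Qed.

Lemma generates_A28 : generates_FSD_LCD (bitmx 28 (map bits_of_string A28)) 6.
Proof. by apply: code_check_sound; vm_compute. Qed.

Lemma generates_A30 : generates_FSD_LCD (bitmx 30 (map bits_of_string A30)) 6.
Proof. by apply: code_check_sound; vm_compute. Qed.

Lemma generates_A32 : generates_FSD_LCD (bitmx 32 (map bits_of_string A32)) 6.
Proof. by apply: code_check_sound; vm_compute. Qed.

Lemma generates_A34 : generates_FSD_LCD (bitmx 34 (map bits_of_string A34)) 7.
Proof. by apply: code_check_sound; vm_compute. Qed.

Lemma generates_A36 : generates_FSD_LCD (bitmx 36 (map bits_of_string A36)) 7.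
Proof. by apply: code_check_sound; vm_compute. Qed.

Lemma generates_A38 : generates_FSD_LCD (bitmx 38 (map bits_of_string A38)) 7.
Proof. by apply: code_check_sound; vm_compute. Qed.

Lemma generates_A22 : generates_FSD_LCD (bitmx 22 (map bits_of_string A22)) 5.
Proof. by apply: code_check_sound; vm_compute. Qed.

Lemma generates_A40 : generates_FSD_LCD (bitmx 40 (map bits_of_string A40)) 8.
Proof. by apply: code_check_sound; vm_compute. Qed.

Lemma generates_A50 : generates_FSD_LCD (bitmx 50 (map bits_of_string A50)) 9.
Proof. by apply: code_check_sound; vm_compute. Qed.

Lemma generator_d6 k :
  k \in [:: 24; 26; 28; 30; 32]%N -> exists A : 'M[F2]_k, generates_FSD_LCD A 6.
Proof.
rewrite !inE => /or4P[| | | /orP[]] /eqP->; eexists.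
- exact: generates_A24.
- exact: generates_A26.
- exact: generates_A28.
- exact: generates_A30.
- exact: generates_A32.
Qed.

Lemma generator_d7 k :
  k \in [:: 34; 36; 38]%N -> exists A : 'M[F2]_k, generates_FSD_LCD A 7.
Proof.
rewrite !inE => /or3P[] /eqP->; eexists.
- exact: generates_A34.
- exact: generates_A36.
- exact: generates_A38.
Qed.

Theorem theorem6 :
  (forall n1 n2 s : nat,
      (2 * n1)%N \in [:: 24; 26; 28; 30; 32]%N ->
      (2 * n2)%N \in [:: 34; 36; 38]%N ->
      (1 <= s)%N ->
      exists_FSD_LCD (4 * s * n1) (2 * s * n1) 6 /\
      exists_FSD_LCD (4 * s * n2) (2 * s * n2) 7) /\
  (forall s : nat, (1 <= s)%N ->
      [/\ exists_FSD_LCD (44 * s) (22 * s) 5,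
          exists_FSD_LCD (80 * s) (40 * s) 8 &
          exists_FSD_LCD (100 * s) (50 * s) 9]).
Proof.
split=> [n1 n2 s /generator_d6[A1 gA1] /generator_d7[A2 gA2] s_gt0 | s s_gt0].
  by split; [apply: (exists_FSD_LCD_rep gA1 s_gt0) | apply: (exists_FSD_LCD_rep gA2 s_gt0)]; lia.
split; [apply: (exists_FSD_LCD_rep generates_A22 s_gt0)
       | apply: (exists_FSD_LCD_rep generates_A40 s_gt0)
       | apply: (exists_FSD_LCD_rep generates_A50 s_gt0)]; lia.
Qed.
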